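(* Let $Y$ be a totally ordered set. The Lyndon monomials $P_w$, for $w$ ranging over Lyndon words in $Y$ without repetition (no letter occurring twice), form a $\mathbb Z$-basis of $R\mathfrak L[Y]$. Consequently, for $|Y|=n$, the degree-$k$ part $R\mathfrak L[n]_k$ is free abelian of rank $(k-1)!\binom{n}{k}$.
   Context: $R\mathfrak L[Y]$ is the Lie ring generated by $Y$ subject to $[y_1,[y_2,[\cdots[y_{s-1},y_s]\cdots]]]=0$ for every $s\geq2$ and every $(y_1,\dots,y_s)\in Y^s$ with $y_i=y_j$ for some $i\neq j$; it is graded by bracket length. Words in $Y$ are ordered lexicographically (dictionary order). A Lyndon word is a nonempty word strictly smaller than each of its proper nonempty suffixes. The standard factorization of a word $w$ of length $\geq2$ is $w=uv$ where $v$ is its smallest proper suffix. Lyndon monomials are defined inductively: $P_y=y$ for a letter $y$, and $P_w=[P_u,P_v]$ if $w=uv$ is the standard factorization of the Lyndon word $w$ (here $P_w$ is viewed in $R\mathfrak L[Y]$). *)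

From HB Require Import structures.
From mathcomp Require Import all_boot all_order all_algebra.
Set Implicit Arguments. Unset Strict Implicit. Unset Printing Implicit Defensive.
Import Order.TTheory GRing.Theory Num.Theory.
Local Open Scope ring_scope.

Record is_lie_ring (L : zmodType) (br : L -> L -> L) : Prop := {
  br_addl : forall x y z, br (x + y) z = br x z + br y z;
  br_addr : forall x y z, br x (y + z) = br x y + br x z;
  br_alt : forall x, br x x = 0;
  br_jacobi : forall x y z, br x (br y z) + br y (br z x) + br z (br x y) = 0 }.

Definition is_lie_hom (L M : zmodType) (brL : L -> L -> L) (brM : M -> M -> M)
  (g : L -> M) : Prop :=
  (forall x y, g (x + y) = g x + g y) /\ (forall x y, g (brL x y) = brM (g x) (g y)).

Fixpoint rnbr (Y : Type) (L : zmodType) (br : L -> L -> L) (i : Y -> L)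
  (s : seq Y) : L :=
  match s with
  | [::] => 0
  | [:: y] => i y
  | y :: s' => br (i y) (rnbr br i s')
  end.

Definition RL_relations (Y : eqType) (L : zmodType) (br : L -> L -> L)
  (i : Y -> L) : Prop :=
  forall s : seq Y, (2 <= size s)%N -> ~~ uniq s -> rnbr br i s = 0.

(* (L, br, i) is a presentation of R L[Y]: the Lie ring generated by Y subject
   to the relations above, i.e. the initial object among Lie rings with a map
   from Y satisfying the relations. *)
Definition is_RL (Y : eqType) (L : zmodType) (br : L -> L -> L) (i : Y -> L) : Prop :=
  is_lie_ring br /\ RL_relations br i /\
  forall (M : zmodType) (brM : M -> M -> M) (f : Y -> M),
    is_lie_ring brM -> RL_relations brM f ->
    exists! g : L -> M, is_lie_hom br brM g /\ forall y, g (i y) = f y.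

Inductive btree (Y : Type) : Type :=
  | BLeaf of Y
  | BNode of btree Y & btree Y.

Fixpoint bt_eval (Y : Type) (L : zmodType) (br : L -> L -> L) (i : Y -> L)
  (t : btree Y) : L :=
  match t with
  | BLeaf y => i y
  | BNode t1 t2 => br (bt_eval br i t1) (bt_eval br i t2)
  end.

Fixpoint bt_len (Y : Type) (t : btree Y) : nat :=
  match t with
  | BLeaf _ => 1
  | BNode t1 t2 => bt_len t1 + bt_len t2
  end.

Definition deg_part (Y : Type) (L : zmodType) (br : L -> L -> L) (i : Y -> L)
  (k : nat) (x : L) : Prop :=
  exists s : seq (int * btree Y),
    all (fun p => bt_len p.2 == k) s /\ x = \sum_(p <- s) (bt_eval br i p.2) *~ p.1.

Definition Zindep (I : eqType) (L : zmodType) (b : I -> L) (A : pred I) : Prop :=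
  forall (s : seq I) (c : I -> int), uniq s -> all A s ->
    \sum_(j <- s) b j *~ c j = 0 -> forall j, j \in s -> c j = 0.

Definition Zspans (I : eqType) (L : zmodType) (b : I -> L) (A : pred I)
  (S : L -> Prop) : Prop :=
  forall x, S x <-> exists (s : seq I) (c : I -> int),
    all A s /\ x = \sum_(j <- s) b j *~ c j.

Definition is_Zbasis (I : eqType) (L : zmodType) (b : I -> L) (A : pred I)
  (S : L -> Prop) : Prop := Zindep b A /\ Zspans b A S.

Definition free_of_rank (L : zmodType) (S : L -> Prop) (r : nat) : Prop :=
  exists b : 'I_r -> L, is_Zbasis b predT S.

Section Words.
Context {d : Order.disp_t} {Y : orderType d}.

Fixpoint lexlt (s t : seq Y) : bool :=
  match s, t with
  | [::], [::] => false
  | [::], _ :: _ => true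
  | _ :: _, [::] => false
  | x :: s', y :: t' => ((x < y)%O) || ((x == y) && lexlt s' t')
  end.

Definition lyndon (w : seq Y) : bool :=
  (w != [::]) && all (fun j => lexlt w (drop j w)) (iota 1 (size w).-1).

(* smallest proper nonempty suffix (for size w >= 2) *)
Definition min_suffix (w : seq Y) : seq Y :=
  foldl (fun m s => if lexlt s m then s else m) (drop 1 w)
        [seq drop j w | j <- iota 2 (size w - 2)].

Fixpoint lyndon_mon_rec (L : zmodType) (br : L -> L -> L) (i : Y -> L)
  (n : nat) (w : seq Y) : L :=
  match n with
  | 0 => 0
  | n'.+1 =>
    match w with
    | [:: y] => i y
    | _ => let v := min_suffix w in
           br (lyndon_mon_rec br i n' (take (size w - size v) w))
              (lyndon_mon_rec br i n' v)
    end
  end.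

(* P_w, with the standard factorization w = uv, v the smallest proper suffix *)
Definition lyndon_mon (L : zmodType) (br : L -> L -> L) (i : Y -> L)
  (w : seq Y) : L := lyndon_mon_rec br i (size w) w.

End Words.

From HB Require Import structures.
From mathcomp Require Import all_boot all_order all_algebra.
From mathcomp Require Import boolp functions zify.
Import Order.TTheory GRing.Theory Num.Theory Order.DefaultSeqLexiOrder.
Unset Printing Implicit Defensive.
Local Open Scope ring_scope.

(* By the universal property, R L[Y] is spanned by bracket trees, and since
   [ad z] is a derivation, every tree t is a Z-combination of left-normed brackets
   [..[[a, y1], y2] .., ym] where a y1 .. ym runs over permutations of the leaves of
   t and a is the least leaf.  Such a bracket vanishes when a y1 .. ym has a repeated
   letter, and a word without repetition is Lyndon iff its first letter is its least
   one; so these left-normed brackets are indexed by the Lyndon words with the same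
   letters, and they are related to the Lyndon monomials by a unitriangular matrix.

   The matrix, and the linear independence, are computed in a model: Z-valued
   functions on words, with the concatenation product restricted to words without
   repetition.  Its commutator satisfies the defining relations, and it maps P_w to
   a function with value 1 at w whose other nonzero values are at permutations of w
   that are lexicographically larger.

   The rank of the degree-k part is the number of Lyndon words of length k without
   repetition: choose k letters, put the least one first and arrange the others in
   any order, which gives (k-1)! * C(n, k). *)

Lemma ex_min_seq {d} {T : orderType d} {s : seq T} :
  s != [::] -> exists2 m, m \in s & forall y, y \in s -> (m <= y)%O.
Proof.
elim: s => [|x [|y s] IH] // _.
  by exists x => [|y]; rewrite ?mem_seq1 // => /eqP->.
have [m ms mmin] := IH isT; exists (Order.min x m).
  by rewrite minEle; case: ifP; rewrite inE ?eqxx ?ms ?orbT.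
move=> z; rewrite inE ge_min => /orP[/eqP->|/mmin->]; by rewrite ?lexx ?orbT.
Qed.

Lemma count_lt_subpred {T : eqType} {a1 a2 : pred T} {s : seq T} {x} :
  subpred a1 a2 -> x \in s -> a2 x -> ~~ a1 x -> (count a1 s < count a2 s)%N.
Proof.
move=> a12; elim: s => //= y s IH; rewrite inE => /orP[/eqP<-|xs] a2x a1x.
  by rewrite (negbTE a1x) a2x add0n add1n ltnS sub_count.
have := IH xs a2x a1x; have : (a1 y <= a2 y)%N by case: (a1 y) (a12 y) => // /(_ isT) ->.
lia.
Qed.

(** * Integral spans *)

Section AdditiveFun.
Context {L M : zmodType} {h : L -> M}.
Hypothesis hD : {morph h : x y / x + y}.

Lemma additive_fun0 : h 0 = 0.
Proof. by apply: (@addrI _ (h 0)); rewrite -hD !addr0. Qed.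

Lemma additive_funN x : h (- x) = - h x.
Proof. by apply: (@addrI _ (h x)); rewrite -hD !subrr additive_fun0. Qed.

Lemma additive_funMz x n : h (x *~ n) = h x *~ n.
Proof.
have hMn m : h (x *+ m) = h x *+ m.
  by elim: m => [|m IH]; rewrite ?additive_fun0 // !mulrS hD IH.
by case: n => n; rewrite ?NegzE ?mulrNz ?additive_funN -!pmulrn hMn.
Qed.

Lemma additive_fun_sum (I : Type) (s : seq I) (P : pred I) (F : I -> L) :
  h (\sum_(j <- s | P j) F j) = \sum_(j <- s | P j) h (F j).
Proof.
elim: s => [|a s IH]; first by rewrite !big_nil additive_fun0.
by rewrite !big_cons; case: (P a); rewrite ?hD IH.
Qed.

End AdditiveFun.

Definition zspan {I : Type} {L : zmodType} (F : I -> L) (A : pred I) (x : L) : Prop :=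
  exists s : seq (int * I), all (fun q => A q.2) s /\ x = \sum_(q <- s) F q.2 *~ q.1.

Section ZSpan.
Context {I : Type} {L : zmodType} (F : I -> L) (A : pred I).

Lemma zspan0 : zspan F A 0.
Proof. by exists [::]; rewrite big_nil. Qed.

Lemma zspanD x y : zspan F A x -> zspan F A y -> zspan F A (x + y).
Proof. by move=> [s [As ->]] [t [At ->]]; exists (s ++ t); rewrite all_cat As At big_cat. Qed.

Lemma zspanMz x c : zspan F A x -> zspan F A (x *~ c).
Proof.
move=> [s [As ->]]; exists [seq (q.1 * c, q.2) | q <- s]; rewrite all_map.
by rewrite big_map mulrz_suml; split=> //; apply: eq_bigr => q _; rewrite mulrzA.
Qed.

Lemma zspanN x : zspan F A x -> zspan F A (- x).
Proof. by move=> /(zspanMz _ (-1)); rewrite mulrN1z. Qed.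

Lemma zspanB x y : zspan F A x -> zspan F A y -> zspan F A (x - y).
Proof. by move=> Sx /zspanN; apply: zspanD. Qed.

Lemma zspan_gen j : A j -> zspan F A (F j).
Proof. by move=> Aj; exists [:: (1, j)]; rewrite /= Aj big_seq1 mulr1z. Qed.

Lemma zspan_sum (J : Type) (r : seq J) (P : pred J) (G : J -> L) :
  (forall j, P j -> zspan F A (G j)) -> zspan F A (\sum_(j <- r | P j) G j).
Proof. by move=> SG; apply: big_ind => //; [apply: zspan0 | apply: zspanD]. Qed.

Lemma sub_zspan (B : pred I) x : subpred A B -> zspan F A x -> zspan F B x.
Proof.
move=> AB [s [As ->]]; exists s; split=> //.
by apply: sub_all As => q /AB.
Qed.

End ZSpan.

Lemma zspan_additive {I J : Type} {L M : zmodType} {F : I -> L} {A : pred I}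
    {G : J -> M} {B : pred J} (h : L -> M) {x} :
  {morph h : x y / x + y} -> zspan F A x ->
  (forall j, A j -> zspan G B (h (F j))) -> zspan G B (h x).
Proof.
move=> hD [s [As ->]] SG; elim: s As => [_|q s IH] /=.
  by rewrite big_nil (additive_fun0 hD); apply: zspan0.
case/andP=> Aq As; rewrite big_cons hD (additive_funMz hD).
by apply: zspanD (IH As); apply/zspanMz/SG.
Qed.

Lemma zspan_trans {I J : Type} {L : zmodType} {F : I -> L} {A : pred I}
    {G : J -> L} {B : pred J} {x} :
  zspan F A x -> (forall j, A j -> zspan G B (F j)) -> zspan G B x.
Proof. exact: (zspan_additive id (fun _ _ => erefl)). Qed.

Lemma zspan_collapse {I : eqType} {L : zmodType} {F : I -> L} {A : pred I} {x} (r : seq I) :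
  uniq r -> (forall j, A j -> j \in r) -> zspan F A x ->
  exists c : I -> int, x = \sum_(j <- r) F j *~ c j.
Proof.
move=> ur Ar [s [As ->]]; exists (fun j => \sum_(q <- s | q.2 == j) q.1).
under [RHS]eq_bigr => j _ do rewrite mulrz_sumr.
rewrite (exchange_big_dep xpredT) //=; apply: eq_big_seq => q qs.
rewrite (eq_bigr (fun _ => F q.2 *~ q.1)) => [|j /eqP-> //].
rewrite -big_filter (eq_filter (a2 := pred1 q.2)) => [|j]; last by rewrite /= eq_sym.
by rewrite filter_pred1_uniq ?big_seq1 //; apply/Ar/(allP As).
Qed.

Lemma Zspans_zspan {I : eqType} {L : zmodType} (F : I -> L) (A : pred I) :
  Zspans F A (zspan F A).
Proof.
move=> x; split=> [Sx | [s [c [As ->]]]]; last first.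
  by rewrite big_seq; apply: zspan_sum => j js; apply/zspanMz/zspan_gen/(allP As).
have [s0 [As0 x_eq]] := Sx; set r := undup [seq q.2 | q <- s0].
have [|c ->] := @zspan_collapse _ _ F [pred j | j \in r] x r (undup_uniq _) (fun _ => id).
  by exists s0; split=> //; apply/allP => q qs /=; rewrite mem_undup map_f.
exists r, c; split=> //; apply/allP => j; rewrite mem_undup => /mapP[q qs ->].
exact: (allP As0).
Qed.

Lemma unitriangular_zspan {I : eqType} {L : zmodType} (lt : rel I) (r : seq I)
    (u v : I -> L) (c : I -> I -> int) :
  irreflexive lt -> transitive lt -> uniq r ->
  (forall p, p \in r -> u p = \sum_(q <- r) v q *~ c p q) ->
  (forall p, p \in r -> c p p = 1) ->
  (forall p q, p \in r -> q != p -> c p q != 0 -> lt p q) ->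
  forall p, p \in r -> zspan u [in r] (v p).
Proof.
move=> irr tr ur u_exp c1 c_tri.
suff IH n p : p \in r -> (count (lt p) r < n)%N -> zspan u [in r] (v p).
  by move=> p pr; apply: (IH _ p pr (ltnSn _)).
elim: n p => // n IH p pr cnt.
have -> : v p = u p - \sum_(q <- r | q != p) v q *~ c p q.
  by rewrite u_exp // (bigD1_seq p) //= c1 // mulr1z addrK.
apply: zspanB; first exact: zspan_gen.
rewrite big_seq_cond; apply: zspan_sum => q /andP[qr qp].
have [->|cpq] := eqVneq (c p q) 0; first by rewrite mulr0z; apply: zspan0.
have lt_pq := c_tri p q pr qp cpq.
apply/zspanMz/IH => //; rewrite -ltnS; apply: leq_trans cnt.
by apply: (count_lt_subpred _ qr lt_pq (negbT (irr q))) => x; apply: tr lt_pq.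
Qed.

(** * Lyndon words without repetition *)

Section Words.
Context {d : Order.disp_t} {Y : orderType d}.
Implicit Types (a : Y) (r s t u v w : seq Y).

Lemma lexltE s t : lexlt s t = (s < t)%O.
Proof. by elim: s t => [|x s IH] [|y t] //=; rewrite ltxi_cons IH; case: ltgtP. Qed.

Lemma lexi_cat2l u v v' : (u ++ v <= u ++ v')%O = (v <= v')%O.
Proof. by elim: u => //= a u IH; rewrite eqhead_lexiE. Qed.

Lemma ltxi_cat_size u v u' v' :
  size u = size u' -> (u < u')%O -> (u ++ v < u' ++ v')%O.
Proof.
elim: u u' => [|a u IH] [|a' u'] //= [/IH{}IH]; rewrite !ltxi_cons.
by case/andP=> -> /implyP uu'; apply/implyP => /uu'/IH.
Qed.

Lemma lexi_cat u v u' v' : size u = size u' ->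
  (u <= u')%O -> (v <= v')%O -> (u ++ v <= u' ++ v')%O.
Proof.
move=> size_u; rewrite le_eqVlt => /orP[/eqP<-|lt_u] le_v; first by rewrite lexi_cat2l.
exact/ltW/ltxi_cat_size.
Qed.

Lemma lyndon_uniq a r : uniq (a :: r) -> lyndon (a :: r) = all (fun y => a < y)%O r.
Proof.
case/andP=> ar _.
change (all (fun j => lexlt (a :: r) (drop j (a :: r))) (iota 1 (size r)) =
        all (fun y => a < y)%O r).
have suffixE j : (j < size r)%N ->
    lexlt (a :: r) (drop j.+1 (a :: r)) = (a < nth a r j)%O.
  move=> jr; rewrite lexltE /= (drop_nth a jr) neqhead_ltxiE //.
  by apply: contraNneq ar => ->; apply: mem_nth.
apply/allP/allP => [H y yr | H [|j]]; rewrite ?mem_iota //.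
  have jr : (index y r < size r)%N by rewrite index_mem.
  by have := H (index y r).+1; rewrite mem_iota add1n !ltnS jr suffixE // (nth_index _ yr) => ->.
by rewrite add1n ltnS => jr; rewrite suffixE // H // mem_nth.
Qed.

Lemma foldl_minP (l : seq (seq Y)) m0 :
  let m := foldl (fun m s => if lexlt s m then s else m) m0 l in
  m \in m0 :: l /\ forall s, s \in m0 :: l -> (m <= s)%O.
Proof.
elim: l m0 => [|s l IH] m0 /=.
  by split=> [|s]; rewrite ?mem_seq1 // => /eqP->.
have [m_in m_min] := IH (if lexlt s m0 then s else m0).
rewrite lexltE in m_in m_min *; split.
  by move: m_in; case: ifP; rewrite !inE => _ /orP[]->; rewrite ?orbT.
have le_m := m_min _ (mem_head _ _).
move=> s'; rewrite !inE => /orP[/eqP->|/orP[/eqP->|s'l]]; last by rewrite m_min ?inE ?s'l ?orbT.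
  by apply: le_trans le_m _; case: ltP => // /ltW.
by apply: le_trans le_m _; case: ltP.
Qed.

Definition std_prefix w := take (size w - size (min_suffix w)) w.

Lemma min_suffixP w : (2 <= size w)%N -> exists2 j, (0 < j < size w)%N &
  [/\ min_suffix w = drop j w, std_prefix w = take j w &
      forall j', (0 < j' < size w)%N -> (drop j w <= drop j' w)%O].
Proof.
move=> w2; rewrite /std_prefix /min_suffix.
set l := [seq drop j w | j <- iota 2 (size w - 2)].
have [m_in m_min] := foldl_minP l (drop 1 w).
have suffix_in j : (0 < j < size w)%N -> drop j w \in drop 1 w :: l.
  case: j => [|[|j]] //= jw; first by rewrite mem_head.
  rewrite inE; apply/orP; right; apply: (map_f (fun j => drop j w)).
  by rewrite mem_iota; lia.
have [j jw mE] : exists2 j, (0 < j < size w)%N &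
    foldl (fun m s => if lexlt s m then s else m) (drop 1 w) l = drop j w.
  move: m_in; rewrite inE => /orP[/eqP->|/mapP[j]]; first by exists 1%N => //; lia.
  by rewrite mem_iota => j2 ->; exists j => //; lia.
rewrite mE in m_min *; exists j => //; split => // [|j' /suffix_in/m_min //].
by rewrite size_drop; congr take; lia.
Qed.

Lemma cat_std_prefix_min_suffix w : (2 <= size w)%N ->
  std_prefix w ++ min_suffix w = w.
Proof. by case/min_suffixP=> j _ [-> -> _]; rewrite cat_take_drop. Qed.

Lemma min_suffix_lyndon w : uniq w -> (2 <= size w)%N ->
  lyndon (min_suffix w) && uniq (min_suffix w).
Proof.
move=> uw w2; have [a _] : exists a : Y, True by case: (w) w2 => [|a] // *; exists a.
case/min_suffixP: w2 => j /andP[j0 jw] [-> _ jmin].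
have uv : uniq (drop j w) by rewrite drop_uniq.
rewrite uv andbT (drop_nth a jw) lyndon_uniq -?(drop_nth a jw) //.
move: uv; rewrite (drop_nth a jw) => /andP[wj_notin _].
apply/allP => y y_in; rewrite lt_neqAle; apply/andP; split.
  by apply: contraNneq wj_notin => ->.
have [q q_lt ->] : exists2 q, (j.+1 + q < size w)%N & y = nth a w (j.+1 + q).
  exists (index y (drop j.+1 w)); last by rewrite -nth_drop nth_index.
  by rewrite -ltn_subRL -size_drop index_mem.
have := jmin (j.+1 + q); rewrite q_lt andbT => /(_ isT).
by rewrite (drop_nth a jw) (drop_nth a q_lt) => /lexi_lehead.
Qed.

Lemma std_prefix_lyndon w : uniq w -> lyndon w -> (2 <= size w)%N ->
  exists a u, [/\ std_prefix w = a :: u, lyndon (a :: u) && uniq (a :: u)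
                & all (fun y => a < y)%O (min_suffix w)].
Proof.
case: w => // a r uw; rewrite lyndon_uniq // => a_min.
case/min_suffixP=> [[|j] // _ [-> -> _]]; exists a, (take j r).
have uu : uniq (a :: take j r) by apply: (take_uniq j.+1 uw).
rewrite uu andbT lyndon_uniq //=; split => //; apply/allP => y.
  by move/mem_take; apply: (allP a_min).
by move/mem_drop; apply: (allP a_min).
Qed.

End Words.

(** * Lie rings and left-normed brackets *)

Section LieRing.
Context {L : zmodType} {br : L -> L -> L}.
Hypothesis brL : is_lie_ring br.

Lemma lie_brNl x y : br (- x) y = - br x y.
Proof. exact: (additive_funN (fun a b => br_addl brL a b y)). Qed.

Lemma lie_brNr x y : br x (- y) = - br x y.
Proof. exact: (additive_funN (br_addr brL x)). Qed.

Lemma lie_anti x y : br x y = - br y x.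
Proof.
apply/eqP; rewrite -addr_eq0; apply/eqP.
have := br_alt brL (x + y).
by rewrite (br_addl brL) !(br_addr brL) !(br_alt brL) add0r addr0.
Qed.

Lemma lie_leibniz z x y : br z (br x y) = br (br z x) y - br (br z y) x.
Proof.
have := br_jacobi brL z x y.
rewrite [br x (br y z)]lie_anti [br y z]lie_anti lie_brNl opprK.
rewrite [br y (br z x)]lie_anti => /eqP; rewrite -addrA addr_eq0 => /eqP->.
by rewrite opprD opprK addrC.
Qed.

End LieRing.

Section Generation.
Context {Y : eqType} {L : zmodType} (br : L -> L -> L) (i : Y -> L).

Definition bracket_span := [pred x | `[< zspan (bt_eval br i) predT x >]].

Lemma bracket_span_zmod_closed : zmod_closed bracket_span.
Proof.
split=> [|x y]; rewrite !inE; first by apply/asboolP/zspan0.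
by move=> /asboolP Sx /asboolP Sy; apply/asboolP/zspanB.
Qed.

HB.instance Definition _ := GRing.isZmodClosed.Build L bracket_span
  bracket_span_zmod_closed.

Record bracket_sub := BracketSub { bracket_val :> L; _ : bracket_val \in bracket_span }.
HB.instance Definition _ := [isSub for bracket_val].
HB.instance Definition _ := [Choice of bracket_sub by <:].
HB.instance Definition _ := [SubChoice_isSubZmodule of bracket_sub by <:].

Hypothesis brL : is_lie_ring br.

Lemma bracket_span_br {x y} : x \in bracket_span -> y \in bracket_span ->
  br x y \in bracket_span.
Proof.
rewrite !inE => /asboolP Sx /asboolP Sy; apply/asboolP.
apply: (zspan_additive (br^~ y) (fun a b => br_addl brL a b y) Sx) => s _.
apply: (zspan_additive (br (bt_eval br i s)) (br_addr brL _) Sy) => t _.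
exact: (zspan_gen _ _ (BNode s t)).
Qed.

Definition bracket_sub_br (x y : bracket_sub) : bracket_sub :=
  BracketSub _ (bracket_span_br (valP x) (valP y)).

Lemma bracket_span_leaf y : i y \in bracket_span.
Proof. by rewrite inE; apply/asboolP/(zspan_gen _ _ (BLeaf y)). Qed.

Definition bracket_sub_gen (y : Y) : bracket_sub := BracketSub _ (bracket_span_leaf y).

Lemma bracket_sub_lie : is_lie_ring bracket_sub_br.
Proof.
split=> *; apply: val_inj => /=.
- exact: (br_addl brL).
- exact: (br_addr brL).
- exact: (br_alt brL).
- exact: (br_jacobi brL).
Qed.

Lemma val_rnbr s : val (rnbr bracket_sub_br bracket_sub_gen s) = rnbr br i s.
Proof. by elim: s => [|y [|z s] IH] //; rewrite /= IH. Qed.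

Lemma bracket_sub_rel : RL_relations br i -> RL_relations bracket_sub_br bracket_sub_gen.
Proof. by move=> rel s s2 nu; apply: val_inj; rewrite val_rnbr rel. Qed.

End Generation.

Lemma RL_bracket_span {Y : eqType} {L : zmodType} (br : L -> L -> L) (i : Y -> L) x :
  is_RL br i -> zspan (bt_eval br i) predT x.
Proof.
move=> [brL [rel univ]].
have [g [[g_hom g_i] _]] := univ _ _ _ (bracket_sub_lie br i brL) (bracket_sub_rel br i brL rel).
have [id' [_ id'_uniq]] := univ _ _ _ brL rel.
(* [id] and [val \o g] are both Lie homs extending [i]. *)
have id'_id : id' = id by apply: id'_uniq.
have id'_g : id' = val \o g.
  apply: id'_uniq; split=> [|y]; last by rewrite /= g_i.
  by split=> a b /=; rewrite ?(proj1 g_hom) ?(proj2 g_hom).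
rewrite -[x]/(id x) -id'_id id'_g.
by have := valP (g x); rewrite inE => /asboolP.
Qed.

Definition lnbr {Y : Type} {L : zmodType} (br : L -> L -> L) (i : Y -> L)
  (z : L) (s : seq Y) : L := foldl (fun acc y => br acc (i y)) z s.

Lemma lnbr_rcons {Y : Type} {L : zmodType} (br : L -> L -> L) (i : Y -> L) z s y :
  lnbr br i z (rcons s y) = br (lnbr br i z s) (i y).
Proof. by rewrite /lnbr foldl_rcons. Qed.

Lemma lnbr_cat {Y : Type} {L : zmodType} (br : L -> L -> L) (i : Y -> L) z s t :
  lnbr br i z (s ++ t) = lnbr br i (lnbr br i z s) t.
Proof. by rewrite /lnbr foldl_cat. Qed.

Lemma lnbr_morph {Y : Type} {L M : zmodType} (br : L -> L -> L) (brM : M -> M -> M)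
    (i : Y -> L) (j : Y -> M) (g : L -> M) z q :
  is_lie_hom br brM g -> (forall y, g (i y) = j y) -> g (lnbr br i z q) = lnbr brM j (g z) q.
Proof. by move=> [_ gbr] gi; elim/last_ind: q => [|q y IH] //; rewrite !lnbr_rcons gbr IH gi. Qed.

Fixpoint leaves {Y : Type} (t : btree Y) : seq Y :=
  match t with
  | BLeaf y => [:: y]
  | BNode t1 t2 => leaves t1 ++ leaves t2
  end.

Lemma bt_len_leaves {Y : Type} (t : btree Y) : bt_len t = size (leaves t).
Proof. by elim: t => //= t1 -> t2 ->; rewrite size_cat. Qed.

Lemma leaves_neq0 {Y : eqType} (t : btree Y) : leaves t != [::].
Proof. by elim: t => //= t1 IH1 t2 _; case: (leaves t1) IH1. Qed.

Section LeftNormedBrackets.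
Context {Y : eqType} {L : zmodType} (br : L -> L -> L) (i : Y -> L).
Hypothesis brL : is_lie_ring br.

Lemma lnbr_rnbr a q :
  lnbr br i (i a) q = rnbr br i (rev (a :: q)) \/
  lnbr br i (i a) q = - rnbr br i (rev (a :: q)).
Proof.
elim/last_ind: q => [|q y IH]; first by left.
rewrite lnbr_rcons -rcons_cons rev_rcons.
have -> : rnbr br i (y :: rev (a :: q)) = br (i y) (rnbr br i (rev (a :: q))).
  by rewrite rev_cons; case: (rev q).
by case: IH => ->; [right | left]; rewrite (lie_anti brL) ?(lie_brNr brL) ?opprK.
Qed.

Lemma lnbr_nonuniq a q : RL_relations br i -> ~~ uniq (a :: q) -> lnbr br i (i a) q = 0.
Proof.
move=> rel nu; have rnbr0 : rnbr br i (rev (a :: q)) = 0.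
  by apply: rel; rewrite ?rev_uniq // size_rev; case: q nu.
by case: (lnbr_rnbr a q) => ->; rewrite rnbr0 ?oppr0.
Qed.

Lemma zspan_lnbr_br z x e (P Q R : pred (seq Y)) :
  (forall q q', P q -> Q q' -> R (q ++ q')) ->
  zspan (lnbr br i z) P x -> (forall z', zspan (lnbr br i z') Q (br z' e)) ->
  zspan (lnbr br i z) R (br x e).
Proof.
move=> PQR Sx SQ.
apply: (zspan_additive (br^~ e) (fun a b => br_addl brL a b e) Sx) => q Pq.
apply: zspan_trans (SQ (lnbr br i z q)) _ => q' Qq'.
by rewrite -lnbr_cat; apply: zspan_gen; apply: PQR.
Qed.

Lemma br_tree_lnbr t z :
  zspan (lnbr br i z) (fun q => perm_eq q (leaves t)) (br z (bt_eval br i t)).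
Proof.
elim: t z => [y | t1 IH1 t2 IH2] z /=.
  by apply: (zspan_gen _ _ [:: y]).
rewrite (lie_leibniz brL); apply: zspanB; apply: zspan_lnbr_br => // q q' Pq Pq'.
  exact: perm_cat.
by rewrite perm_sym perm_catC perm_sym perm_cat.
Qed.

Lemma tree_lnbr t a : a \in leaves t ->
  zspan (lnbr br i (i a)) (fun q => perm_eq (a :: q) (leaves t)) (bt_eval br i t).
Proof.
elim: t => [y | t1 IH1 t2 IH2] /=.
  by rewrite inE => /eqP->; apply: (zspan_gen _ _ [::]).
rewrite mem_cat; case: (boolP (a \in leaves t1)) => [a1 _ | _ a2].
  by apply: zspan_lnbr_br (IH1 a1) (br_tree_lnbr t2) => q q' Pq Pq'; rewrite -cat_cons perm_cat.
rewrite (lie_anti brL); apply: zspanN.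
apply: zspan_lnbr_br (IH2 a2) (br_tree_lnbr t1) => q q' Pq Pq'.
by rewrite perm_sym perm_catC perm_sym -cat_cons perm_cat.
Qed.

End LeftNormedBrackets.

Section LyndonMonomials.
Context {d : Order.disp_t} {Y : orderType d} {L : zmodType} (br : L -> L -> L) (i : Y -> L).
Implicit Types (w : seq Y).

Lemma lyndon_mon_recS n w : (2 <= size w)%N ->
  lyndon_mon_rec br i n.+1 w =
  br (lyndon_mon_rec br i n (std_prefix w)) (lyndon_mon_rec br i n (min_suffix w)).
Proof. by case: w => [|a [|b w]]. Qed.

Lemma std_factor_size w : (2 <= size w)%N ->
  (0 < size (std_prefix w) < size w)%N /\ (0 < size (min_suffix w) < size w)%N.
Proof.
by case/min_suffixP=> j /andP[j0 jw] [-> -> _]; rewrite size_take size_drop jw; lia.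
Qed.

Lemma lyndon_mon_rec_tree n w : (0 < size w <= n)%N ->
  exists2 t, bt_eval br i t = lyndon_mon_rec br i n w & leaves t = w.
Proof.
elim: n w => [|n IH] w; first by case: w.
case: w => [|a [|b w]] // /andP[_ wn]; first by exists (BLeaf a).
have w2 : (2 <= size [:: a, b & w])%N by [].
have [/andP[u0 uw] /andP[v0 vw]] := std_factor_size _ w2.
rewrite lyndon_mon_recS //.
have [t1 <- t1_leaves] := IH (std_prefix [:: a, b & w]) ltac:(rewrite u0; lia).
have [t2 <- t2_leaves] := IH (min_suffix [:: a, b & w]) ltac:(rewrite v0; lia).
by exists (BNode t1 t2); rewrite //= t1_leaves t2_leaves cat_std_prefix_min_suffix.
Qed.

Lemma lyndon_mon_tree w : w != [::] ->
  exists2 t, bt_eval br i t = lyndon_mon br i w & leaves t = w.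
Proof. by move=> w0; apply: lyndon_mon_rec_tree; rewrite lt0n size_eq0 w0 /=. Qed.

Lemma lyndon_mon_morph {M : zmodType} (brM : M -> M -> M) (j : Y -> M) (g : L -> M) w :
  is_lie_hom br brM g -> (forall y, g (i y) = j y) ->
  g (lyndon_mon br i w) = lyndon_mon brM j w.
Proof.
move=> [gD gbr] gi; rewrite /lyndon_mon; move: (size w) => n.
elim: n w => [|n IH] w /=.
  exact: additive_fun0 gD.
by case: w => [|y [|z w]]; rewrite /= ?gbr ?IH ?gi.
Qed.

End LyndonMonomials.

(** * A model: functions on words without repetition *)

Section Convolution.
Context {Y : Type}.
Implicit Types (f g h : seq Y -> int) (w : seq Y).

(* [conv f g w] is the sum of [f u * g v] over the factorizations [w = u ++ v]. *)
Fixpoint conv f g w : int :=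
  match w with
  | [::] => f [::] * g [::]
  | a :: w' => f [::] * g w + conv (fun u => f (a :: u)) g w'
  end.

Lemma eq_conv f f' g g' w :
  (forall j, f (take j w) = f' (take j w)) ->
  (forall j, g (drop j w) = g' (drop j w)) -> conv f g w = conv f' g' w.
Proof.
elim: w f f' => [|a w IH] f f' Hf Hg /=; rewrite (Hf 0%N) (Hg 0%N) //.
by congr (_ + _); apply: IH => j; [apply: (Hf j.+1) | apply: (Hg j.+1)].
Qed.

Lemma conv_addl f f' g w : conv (fun u => f u + f' u) g w = conv f g w + conv f' g w.
Proof. by elim: w f f' => [|a w IH] f f' /=; rewrite ?IH mulrDl // addrACA. Qed.

Lemma conv_addr f g g' w : conv f (fun u => g u + g' u) w = conv f g w + conv f g' w.
Proof. by elim: w f => [|a w IH] f /=; rewrite ?IH mulrDr // addrACA. Qed.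

Lemma conv_oppl f g w : conv (fun u => - f u) g w = - conv f g w.
Proof. by elim: w f => [|a w IH] f /=; rewrite ?IH mulNr // opprD. Qed.

Lemma conv_oppr f g w : conv f (fun u => - g u) w = - conv f g w.
Proof. by elim: w f => [|a w IH] f /=; rewrite ?IH mulrN // opprD. Qed.

Lemma conv_mull c f g w : conv (fun u => c * f u) g w = c * conv f g w.
Proof. by elim: w f => [|a w IH] f /=; rewrite ?IH ?mulrDr mulrA. Qed.

Lemma conv_assoc f g h w : conv f (conv g h) w = conv (conv f g) h w.
Proof.
elim: w f g => [|a w IH] f g /=; first by rewrite mulrA.
by rewrite conv_addl conv_mull IH mulrDr !mulrA addrA.
Qed.

Lemma conv_homogeneous {f} g {p} w : (forall u, f u != 0 -> size u = p) ->
  conv f g w = if (p <= size w)%N then f (take p w) * g (drop p w) else 0.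
Proof.
have f0 f' q u : (forall u', f' u' != 0 -> size u' = q) -> size u != q -> f' u = 0.
  by move=> Hf neq; apply/eqP; apply: contraNT neq => /Hf->.
elim: w f p => [|a w IH] f p Hf /=.
  by case: p Hf => [|p] Hf //; rewrite (f0 f p.+1) ?mul0r.
case: p Hf => [|p] Hf.
  rewrite (IH _ 0%N) => [|u /Hf //]; rewrite take0 drop0.
  by rewrite (f0 f 0%N [:: a]) ?mul0r ?addr0.
by rewrite (f0 f p.+1 [::]) // mul0r add0r (IH _ p) // => u /Hf [].
Qed.

End Convolution.

Section InjectiveWordModel.
Context {Y : eqType}.
Implicit Types (f g h F G : seq Y -> int) (s t u v w x : seq Y).

(* The product of the ring of formal series Z<<Y>> modulo the ideal of words with
   a repeated letter. *)
Definition uconv f g w : int := if uniq w then conv f g w else 0.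

Definition ucomm f g w : int := uconv f g w - uconv g f w.

Definition letter (y : Y) w : int := if w == [:: y] then 1 else 0.

Lemma conv_uconvr f g h w : uniq w -> conv f (uconv g h) w = conv f (conv g h) w.
Proof. by move=> uw; apply: eq_conv => // j; rewrite /uconv drop_uniq. Qed.

Lemma conv_uconvl f g h w : uniq w -> conv (uconv f g) h w = conv (conv f g) h w.
Proof. by move=> uw; apply: eq_conv => // j; rewrite /uconv take_uniq. Qed.

Lemma ucomm_lie : is_lie_ring ucomm.
Proof.
split=> [f g h | f g h | f | f g h]; apply/funext => w; rewrite /ucomm /uconv ?addrfctE //=.
- by case: (uniq w); rewrite ?conv_addl ?conv_addr ?subr0 // opprD addrACA.
- by case: (uniq w); rewrite ?conv_addl ?conv_addr ?subr0 // opprD addrACA.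
- by rewrite subrr.
case uw: (uniq w); last by rewrite !subrr.
rewrite !conv_addr !conv_addl !conv_oppr !conv_oppl.
rewrite !conv_uconvr // !conv_uconvl // !conv_assoc.
set A := conv (conv f g) h w; set B := conv (conv f h) g w.
set C := conv (conv g f) h w; set D := conv (conv g h) f w.
set E := conv (conv h f) g w; set F := conv (conv h g) f w.
lia.
Qed.

Definition perm_support F s := forall x, F x != 0 -> perm_eq x s.

Lemma perm_support_size {F s} : perm_support F s -> forall u, F u != 0 -> size u = size s.
Proof. by move=> sF u /sF/perm_size. Qed.

Lemma uconv_neq0 {F G s x} : perm_support F s -> uconv F G x != 0 ->
  [/\ uniq x, F (take (size s) x) != 0 & G (drop (size s) x) != 0].
Proof.
move=> sF; rewrite /uconv (conv_homogeneous _ _ (perm_support_size sF)).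
case: (uniq x); last by rewrite eqxx.
by case: ifP; rewrite ?eqxx // mulf_eq0 negb_or => _ /andP[].
Qed.

Lemma uconv_cat {F} G {s} x y : perm_support F s -> size x = size s -> uniq (x ++ y) ->
  uconv F G (x ++ y) = F x * G y.
Proof.
move=> sF sx uxy; rewrite /uconv uxy (conv_homogeneous _ _ (perm_support_size sF)).
by rewrite size_cat -sx leq_addr take_size_cat // drop_size_cat.
Qed.

Lemma uconv_support {F G s t} : perm_support F s -> perm_support G t ->
  perm_support (uconv F G) (s ++ t).
Proof.
move=> sF sG x /(uconv_neq0 sF)[_ /sF Px1 /sG Px2].
by rewrite -(cat_take_drop (size s) x) perm_cat.
Qed.

Lemma ucomm_support {F G s t} : perm_support F s -> perm_support G t ->
  perm_support (ucomm F G) (s ++ t).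
Proof.
move=> sF sG x; rewrite /ucomm.
have [FG0|/(uconv_support sF sG)//] := eqVneq (uconv F G x) 0.
rewrite FG0 sub0r oppr_eq0 => /(uconv_support sG sF).
by rewrite perm_sym perm_catC perm_sym.
Qed.

Lemma letter_support y : perm_support (letter y) [:: y].
Proof. by move=> x; rewrite /letter; case: (x =P [:: y]) => [->|_]; rewrite ?perm_refl ?eqxx. Qed.

Lemma rnbr_support s : s != [::] -> perm_support (rnbr ucomm letter s) s.
Proof.
elim: s => [|y [|z s] IH] // _; first exact: letter_support.
exact: ucomm_support (letter_support y) (IH isT).
Qed.

Lemma ucomm_rel : RL_relations ucomm letter.
Proof.
case=> [|y [|z s]] // _ nonuniq; apply/funext => x.
change (ucomm (letter y) (rnbr ucomm letter (z :: s)) x = 0).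
apply/eqP; apply: contraNT nonuniq => nz.
rewrite -(perm_uniq (ucomm_support (letter_support y) (rnbr_support (z :: s) isT) x nz)) //.
by move: nz; rewrite /ucomm /uconv; case: (uniq x); rewrite ?subrr ?eqxx.
Qed.

Lemma lnbr_support a q : perm_support (lnbr ucomm letter (letter a) q) (a :: q).
Proof.
elim/last_ind: q => [|q y IH]; first exact: letter_support.
by rewrite lnbr_rcons -cats1 -cat_cons; apply: ucomm_support (letter_support y).
Qed.

Lemma lnbr_coef a q p : a \notin q -> uniq (a :: p) ->
  lnbr ucomm letter (letter a) q (a :: p) = (q == p)%:Z.
Proof.
elim/last_ind: q p => [|q y IH] p aq uap.
  by rewrite /lnbr /= /letter eqseq_cons eqxx; case: p uap.
have ay : a != y by apply: contraNneq aq => ->; rewrite mem_rcons mem_head.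
have aq' : a \notin q by apply: contra aq; rewrite mem_rcons inE orbC => ->.
rewrite lnbr_rcons {1}/ucomm /uconv uap.
have -> : conv (letter y) (lnbr ucomm letter (letter a) q) (a :: p) = 0.
  rewrite (conv_homogeneous _ _ (perm_support_size (letter_support y))) /=.
  by rewrite /letter eqseq_cons (negbTE ay) mul0r.
rewrite subr0 (conv_homogeneous _ _ (perm_support_size (lnbr_support a q))).
change (size (a :: q) <= size (a :: p))%N with (size q <= size p)%N.
change (take (size (a :: q)) (a :: p)) with (a :: take (size q) p).
change (drop (size (a :: q)) (a :: p)) with (drop (size q) p).
case: (leqP (size q) (size p)) => [le_qp|lt_pq]; last first.
  suff /negbTE-> : rcons q y != p by [].
  by apply/eqP => qyp; move: lt_pq; rewrite -qyp size_rcons ltnNge leqnSn.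
have -> : (rcons q y == p) = (q == take (size q) p) && (drop (size q) p == [:: y]).
  rewrite -cats1 -{1}(cat_take_drop (size q) p) eqseq_cat ?[[:: y] == _]eq_sym //.
  by rewrite size_take_min; apply/esym/minn_idPl.
rewrite IH //; last exact: (take_uniq (size q).+1 uap).
by rewrite /letter; case: (_ == _); case: (_ == _).
Qed.

End InjectiveWordModel.

Section LexLeading.
Context {d : Order.disp_t} {Y : orderType d}.
Implicit Types (F G : seq Y -> int) (u v w x : seq Y).

Definition lex_leading F w := F w = 1 /\ forall x, F x != 0 -> perm_eq x w /\ (w <= x)%O.

Lemma lex_leading_support {F w} : lex_leading F w -> perm_support F w.
Proof. by move=> [_ Fw] x /Fw[]. Qed.

Lemma letter_leading y : lex_leading (letter y) [:: y].
Proof.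
split=> [|x]; first by rewrite /letter eqxx.
by rewrite /letter; case: (x =P [:: y]) => [->|_]; rewrite ?perm_refl ?eqxx.
Qed.

Lemma ucomm_leading Fu Fv a u v :
  lex_leading Fu (a :: u) -> lex_leading Fv v -> v != [::] ->
  uniq (a :: u ++ v) -> all (fun y => a < y)%O v ->
  lex_leading (ucomm Fu Fv) (a :: u ++ v).
Proof.
move=> [Fu1 Fu_lead] [Fv1 Fv_lead] v0 uw av.
have sFu := lex_leading_support (conj Fu1 Fu_lead).
have sFv := lex_leading_support (conj Fv1 Fv_lead).
have [n size_v] : exists n, size v = n.+1 by case: (v) v0 => // b v' _; exists (size v').
split.
  rewrite /ucomm -cat_cons (uconv_cat Fv (a :: u) v sFu) // Fu1 Fv1 mulr1.
  suff -> : uconv Fv Fu ((a :: u) ++ v) = 0 by rewrite subr0.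
  apply/eqP/negPn/negP => /(uconv_neq0 sFv)[_ /sFv + _]; rewrite size_v /= => /perm_mem/(_ a).
  by rewrite mem_head => /esym/(allP av); rewrite ltxx.
move=> x; rewrite /ucomm; have [FuFv0|] := eqVneq (uconv Fu Fv x) 0; last first.
  case/(uconv_neq0 sFu) => _ /Fu_lead[pu lu] /Fv_lead[pv lv].
  rewrite -(cat_take_drop (size (a :: u)) x) -cat_cons perm_cat //; split=> //.
  by apply: lexi_cat => //; rewrite (perm_size pu).
rewrite FuFv0 sub0r oppr_eq0 => /(uconv_neq0 sFv)[_ /Fv_lead[pv _] /Fu_lead[pu _]].
split.
  by rewrite -(cat_take_drop (size v) x) -cat_cons perm_catC perm_cat.
case: x pv {FuFv0 pu} => [|b x] pv; first by move/perm_size: pv; rewrite size_v.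
have /(allP av) ab : b \in v by rewrite -(perm_mem pv) size_v mem_head.
by apply/ltW; rewrite neqhead_ltxiE ?lt_eqF.
Qed.

Lemma lyndon_mon_rec_leading n w : uniq w -> lyndon w -> (size w <= n)%N ->
  lex_leading (lyndon_mon_rec ucomm letter n w) w.
Proof.
elim: n w => [|n IH] w uw lw wn; first by case: w uw lw wn.
have [w1|w2] := leqP (size w) 1.
  by case: w uw wn w1 lw => [|y [|]] //= *; apply: letter_leading.
rewrite lyndon_mon_recS // -[X in lex_leading _ X](cat_std_prefix_min_suffix w w2).
have [a [u [pE lu av]]] := std_prefix_lyndon w uw lw w2.
have /andP[lv uv] := min_suffix_lyndon w uw w2.
have [/andP[_ pw] /andP[v0 vw]] := std_factor_size w w2.
rewrite pE; apply: ucomm_leading => //.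
- case/andP: lu => lu uu; rewrite -pE; apply: IH; rewrite ?pE // -pE; lia.
- by apply: IH => //; lia.
- by rewrite -size_eq0 -lt0n.
- by rewrite -cat_cons -pE cat_std_prefix_min_suffix.
Qed.

End LexLeading.

(** * Independence and spanning *)

Section ModelImage.
Context {d : Order.disp_t} {Y : orderType d} {L : zmodType} (br : L -> L -> L) (i : Y -> L).
Variable g : L -> seq Y -> int.
Hypotheses (g_hom : is_lie_hom br ucomm g) (g_i : forall y, g (i y) = letter y).

Lemma lyndon_mon_image_leading w : uniq w -> lyndon w ->
  lex_leading (g (lyndon_mon br i w)) w.
Proof.
move=> uw lw; rewrite (lyndon_mon_morph br i ucomm letter g w g_hom g_i).
exact: lyndon_mon_rec_leading.
Qed.

Lemma hom_sum_eval (I : Type) (s : seq I) (F : I -> L) (c : I -> int) x :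
  g (\sum_(j <- s) F j *~ c j) x = \sum_(j <- s) g (F j) x *~ c j.
Proof.
have evalD : {morph (fun f : seq Y -> int => f x) : f f' / f + f'} by [].
rewrite (additive_fun_sum g_hom.1) (additive_fun_sum evalD).
by apply: eq_bigr => j _; rewrite (additive_funMz g_hom.1) (additive_funMz evalD).
Qed.

Lemma lyndon_mon_free (I : eqType) (phi : I -> seq Y) (s : seq I) (c : I -> int) :
  uniq s -> {in s &, injective phi} ->
  (forall j, j \in s -> lyndon (phi j) && uniq (phi j)) ->
  \sum_(j <- s) lyndon_mon br i (phi j) *~ c j = 0 -> forall j, j \in s -> c j = 0.
Proof.
move=> us phi_inj lys sum0 j js; apply/eqP/negPn/negP => cj.
set W := [seq phi k | k <- s & c k != 0].
have jW : phi j \in W by rewrite map_f // mem_filter cj js.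
have W0 : W != [::] by apply: contraTneq jW => ->.
have [_ /mapP[m + ->] m_min] := ex_min_seq W0; rewrite mem_filter => /andP[cm ms].
have /andP[lm um] := lys m ms.
have := congr1 (fun f => g f (phi m)) sum0.
rewrite hom_sum_eval (additive_fun0 g_hom.1) (bigD1_seq m) //=.
rewrite (lyndon_mon_image_leading _ um lm).1 intz big1_seq ?addr0; last first.
  move=> k /andP[km ks]; have [->|ck] := eqVneq (c k) 0; first by rewrite mulr0z.
  have /andP[lk uk] := lys k ks.
  have [->|/(lyndon_mon_image_leading _ uk lk).2 [_ le_km]] :=
    eqVneq (g (lyndon_mon br i (phi k)) (phi m)) 0; first by rewrite mul0rz.
  have le_mk : (phi m <= phi k)%O by apply: m_min; rewrite map_f // mem_filter ck ks.
  by move: km; rewrite (phi_inj k m ks ms) ?eqxx //; apply/le_anti; rewrite le_km le_mk.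
by move/eqP; rewrite (negbTE cm).
Qed.

Hypothesis brL : is_lie_ring br.

Lemma hom_lnbr a q : g (lnbr br i (i a) q) = lnbr ucomm letter (letter a) q.
Proof. by rewrite (lnbr_morph br ucomm i letter g (i a) q g_hom g_i) g_i. Qed.

Lemma lyndon_mon_lnbr_expansion a p (r : seq (seq Y)) : uniq r ->
  (forall q, perm_eq (a :: q) (a :: p) -> q \in r) ->
  (forall q, q \in r -> uniq (a :: q)) ->
  lyndon_mon br i (a :: p) =
    \sum_(q <- r) lnbr br i (i a) q *~ g (lyndon_mon br i (a :: p)) (a :: q).
Proof.
move=> ur r_perm ur_a.
have [t t_eval t_leaves] := lyndon_mon_tree br i (a :: p) isT.
have := tree_lnbr br i brL t a; rewrite t_eval t_leaves mem_head => /(_ isT) Sp.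
have [c cE] := zspan_collapse r ur r_perm Sp.
rewrite {1}cE; apply: eq_big_seq => q qr; congr (_ *~ _).
rewrite cE hom_sum_eval (bigD1_seq q) //= big1_seq => [|q' /andP[q'q q'r]].
  have /andP[aq _] := ur_a q qr.
  by rewrite hom_lnbr lnbr_coef ?ur_a // eqxx intz addr0.
have /andP[aq' _] := ur_a q' q'r.
by rewrite hom_lnbr lnbr_coef ?(negbTE q'q) ?mul0rz // ur_a.
Qed.

Lemma lnbr_lyndon_span (s : seq Y) a p :
  uniq s -> (forall y, y \in s -> a <= y)%O -> perm_eq (a :: p) s ->
  zspan (lyndon_mon br i) (fun w => [&& perm_eq w s, lyndon w & uniq w]) (lnbr br i (i a) p).
Proof.
move=> us a_min pas; have as_ : a \in s by rewrite -(perm_mem pas) mem_head.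
set r := permutations (rem a s).
have memr q : perm_eq (a :: q) s = (q \in r).
  by rewrite mem_permutations (permPr (perm_to_rem as_) (a :: q)) perm_cons.
have lyndon_r q : q \in r -> [&& perm_eq (a :: q) s, lyndon (a :: q) & uniq (a :: q)].
  rewrite -memr => qs; have uq : uniq (a :: q) by rewrite (perm_uniq qs).
  rewrite qs uq lyndon_uniq // andbT; apply/allP => y yq.
  have ys : y \in s by rewrite -(perm_mem qs) inE yq orbT.
  rewrite lt_neqAle a_min // andbT.
  by apply: contraNneq (proj1 (andP uq)) => ->.
have leading_r q : q \in r -> lex_leading (g (lyndon_mon br i (a :: q))) (a :: q).
  by case/lyndon_r/and3P => _ lq uq; apply: lyndon_mon_image_leading.
have Sp : zspan (fun q => lyndon_mon br i (a :: q)) [in r] (lnbr br i (i a) p).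
  apply: (unitriangular_zspan (fun q q' => q < q')%O r _ _
    (fun q q' => g (lyndon_mon br i (a :: q)) (a :: q'))) => [|||q qr|q qr|q q' qr q'q|].
  - exact: ltxx.
  - exact: lt_trans.
  - exact: permutations_uniq.
  - apply: lyndon_mon_lnbr_expansion => [|q' Pq'|q' /lyndon_r/and3P[] //].
      exact: permutations_uniq.
    by rewrite -memr (perm_trans Pq') // memr.
  - exact: (leading_r q qr).1.
  - case/(leading_r q qr).2 => _; rewrite eqhead_lexiE le_eqVlt => /orP[/eqP qq'|//].
    by rewrite qq' eqxx in q'q.
  - by rewrite -memr.
apply: zspan_trans Sp _ => q qr; apply: zspan_gen.
by case/lyndon_r/and3P: qr => -> -> ->.
Qed.

Hypothesis rel : RL_relations br i.

Lemma tree_lyndon_span t :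
  zspan (lyndon_mon br i) (fun w => [&& perm_eq w (leaves t), lyndon w & uniq w])
    (bt_eval br i t).
Proof.
have [a a_in a_min] := ex_min_seq (leaves_neq0 t).
apply: zspan_trans (tree_lnbr br i brL t a a_in) _ => q q_perm.
have [ut|nut] := boolP (uniq (leaves t)); first exact: lnbr_lyndon_span.
by rewrite lnbr_nonuniq ?(perm_uniq q_perm) //; apply: zspan0.
Qed.

End ModelImage.

(** * Counting Lyndon words without repetition *)

Section Enumeration.
Context {d : Order.disp_t} {Y : orderType d}.
Implicit Types (A r w : seq Y).

Fixpoint arrangements A (k : nat) : seq (seq Y) :=
  if k is k'.+1 then [seq x :: w | x <- A, w <- arrangements (rem x A) k'] else [:: [::]].

Lemma mem_arrangements A k w : uniq A ->
  (w \in arrangements A k) = [&& uniq w, size w == k & all [in A] w].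
Proof.
elim: k A w => [|k IH] A w uA /=; first by case: w => [|y w]; rewrite inE //= andbF.
apply/allpairsPdep/idP.
  move=> [x [r [xA rA ->]]]; move: rA; rewrite IH ?rem_uniq // => /and3P[ur /eqP <- rA].
  have sub_r y : y \in r -> (y != x) && (y \in A).
    by move=> yr; have := allP rA y yr; rewrite (mem_rem_uniq _ uA) inE.
  rewrite /= ur eqxx xA andbT; apply/andP; split.
    by apply/negP => /sub_r; rewrite eqxx.
  by apply/allP => y /sub_r /andP[].
case: w => [|x r] //= /and3P[/andP[xr ur] /eqP[sr] /andP[xA rA]].
exists x, r; split=> //; rewrite IH ?rem_uniq // ur sr eqxx /=.
apply/allP => y yr; rewrite /= (mem_rem_uniq _ uA) inE (allP rA) // andbT.
by apply: contraNneq xr => <-.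
Qed.

Lemma arrangements_uniq A k : uniq A -> uniq (arrangements A k).
Proof.
elim: k A => [|k IH] A uA //=; apply: allpairs_uniq_dep => // [x _|[x r] [x' r'] _ _ /= [-> ->]] //.
exact/IH/rem_uniq.
Qed.

Lemma size_arrangements A k : uniq A -> size (arrangements A k) = (size A ^_ k)%N.
Proof.
elim: k A => [|k IH] A uA //=; rewrite size_allpairs_dep ffactnS.
have -> : [seq size (arrangements (rem x A) k) | x <- A] = [seq (size A).-1 ^_ k | _ <- A].
  by apply/eq_in_map => x xA; rewrite IH ?rem_uniq // size_rem.
by move: (_ ^_ k) => c; elim: A {uA IH} => //= _ A ->; rewrite mulSn.
Qed.

Fixpoint lyndon_words A (k : nat) : seq (seq Y) :=
  if A is x :: A' then [seq x :: w | w <- arrangements A' k.-1] ++ lyndon_words A' k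
  else [::].

Lemma mem_map_cons x b r (s : seq (seq Y)) :
  (b :: r \in [seq x :: w | w <- s]) = (b == x) && (r \in s).
Proof.
by apply/mapP/andP => [[w ws [-> ->]] | [/eqP-> rs]]; [rewrite eqxx | exists r].
Qed.

Lemma mem_lyndon_words A k w : (0 < k)%N -> sorted <%O A ->
  (w \in lyndon_words A k) = [&& uniq w, size w == k, all [in A] w & lyndon w].
Proof.
move=> k0; elim: A w => [|x A IH] w sA /=; first by case: w => [|y w]; rewrite /= ?andbF.
have x_lt : all (fun y => x < y)%O A := order_path_min lt_trans sA.
have sA' := path_sorted sA; have uA := lt_sorted_uniq sA'.
have xA : x \notin A by apply/negP => /(allP x_lt); rewrite ltxx.
rewrite mem_cat IH //; case: w => [|b r]; first by rewrite /= !andbF orbF; apply/mapP => -[].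
rewrite mem_map_cons mem_arrangements //; apply/idP/idP.
  case/orP => [/andP[/eqP-> /and3P[ur /eqP sr rA]] | /and4P[ubr -> brA ->]]; last first.
    by rewrite ubr andbT; apply: sub_all brA => y /= yA; rewrite inE yA orbT.
  have xr : x \notin r by apply: contra xA => /(allP rA).
  rewrite /= xr ur sr prednK // eqxx mem_head /= lyndon_uniq /= ?xr //.
  apply/andP; split; apply/allP => y /(allP rA) yA; last exact: (allP x_lt).
  by rewrite inE yA orbT.
case/and4P=> ubr /eqP sbr /andP[bxA rxA] lbr.
have [bx | bx] := eqVneq b x.
  rewrite bx andTb; apply/orP; left; move: ubr; rewrite bx cons_uniq => /andP[xr ur].
  rewrite ur -sbr eqxx /=.
  apply/allP => y yr; move: (allP rxA y yr); rewrite inE => /orP[/eqP yx|//].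
  by move: xr; rewrite -yx yr.
have bA : b \in A by move: bxA; rewrite inE (negbTE bx).
have b_lt : all (fun y => b < y)%O r by rewrite -lyndon_uniq.
rewrite ubr sbr eqxx lbr /= bA andbT; apply/allP => y yr.
move: (allP rxA y yr); rewrite inE => /orP[/eqP yx|//].
by move: (lt_trans (allP x_lt b bA) (allP b_lt y yr)); rewrite yx ltxx.
Qed.

Lemma lyndon_words_uniq A k : (0 < k)%N -> sorted <%O A -> uniq (lyndon_words A k).
Proof.
move=> k0; elim: A => [|x A IH] //= sA.
have x_lt : all (fun y => x < y)%O A := order_path_min lt_trans sA.
have sA' := path_sorted sA; have uA := lt_sorted_uniq sA'.
rewrite cat_uniq IH // andbT map_inj_uniq ?arrangements_uniq // => [|? ? [] //].
apply/hasPn => w; rewrite mem_lyndon_words // => /and4P[_ _ wA _].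
by apply/mapP => -[r _ wE]; move: wA; rewrite wE /= => /andP[/(allP x_lt)]; rewrite ltxx.
Qed.

Lemma size_lyndon_words A k : (0 < k)%N -> uniq A ->
  size (lyndon_words A k) = ((k.-1)`! * 'C(size A, k))%N.
Proof.
case: k => // k _; elim: A => [|x A IH] /= uA; first by rewrite bin0n muln0.
case/andP: uA => _ uA; rewrite size_cat size_map size_arrangements // IH // binS mulnDr.
by rewrite -bin_ffact /=; nia.
Qed.

End Enumeration.

Lemma deg_partE {Y : Type} {L : zmodType} (br : L -> L -> L) (i : Y -> L) k :
  deg_part br i k = zspan (bt_eval br i) (fun t => bt_len t == k).
Proof. by []. Qed.

Section Basis.
Context {d : Order.disp_t} {Y : orderType d} {L : zmodType} (br : L -> L -> L) (i : Y -> L).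
Hypothesis RL : is_RL br i.

Lemma RL_model_hom : exists g, is_lie_hom br ucomm g /\ forall y, g (i y) = letter y.
Proof. by have [g [g_spec _]] := RL.2.2 _ _ _ ucomm_lie ucomm_rel; exists g. Qed.

Lemma RL_lyndon_mon_free (I : eqType) (phi : I -> seq Y) (s : seq I) (c : I -> int) :
  uniq s -> {in s &, injective phi} ->
  (forall j, j \in s -> lyndon (phi j) && uniq (phi j)) ->
  \sum_(j <- s) lyndon_mon br i (phi j) *~ c j = 0 -> forall j, j \in s -> c j = 0.
Proof. by have [g [g_hom g_i]] := RL_model_hom; apply: (lyndon_mon_free _ _ _ g_hom g_i). Qed.

Lemma RL_tree_lyndon_span t :
  zspan (lyndon_mon br i) (fun w => [&& perm_eq w (leaves t), lyndon w & uniq w])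
    (bt_eval br i t).
Proof.
have [g [g_hom g_i]] := RL_model_hom; have [brL [rel _]] := RL.
exact: tree_lyndon_span br i g g_hom g_i brL rel t.
Qed.

Lemma lyndon_mon_basis :
  is_Zbasis (lyndon_mon br i) (fun w => lyndon w && uniq w) (fun _ => True).
Proof.
split=> [s c us As | x]; first by apply: (RL_lyndon_mon_free _ id) => //; apply/allP.
split=> // _; apply/(Zspans_zspan (lyndon_mon br i) _ x).
apply: zspan_trans (RL_bracket_span br i x RL) _ => t _.
by apply: sub_zspan (RL_tree_lyndon_span t) => w /and3P[_ -> ->].
Qed.

Lemma deg_part_free (ws : seq (seq Y)) k : uniq ws ->
  (forall w, (w \in ws) = [&& uniq w, size w == k & lyndon w]) ->
  free_of_rank (deg_part br i k) (size ws).
Proof.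
move=> uws mem_ws; set P := fun j : 'I_(size ws) => lyndon_mon br i (nth [::] ws j).
have nth_ws (j : 'I_(size ws)) : [&& uniq (nth [::] ws j), size (nth [::] ws j) == k
    & lyndon (nth [::] ws j)] by rewrite -mem_ws mem_nth.
exists P; split=> [s c us _ sum0 | x].
  apply: (RL_lyndon_mon_free _ (fun j : 'I_(size ws) => nth [::] ws j) s c us _ _ sum0).
    by move=> j1 j2 _ _ /eqP; rewrite nth_uniq // => /eqP/val_inj.
  by move=> j _; case/and3P: (nth_ws j) => -> _ ->.
apply: (iff_trans _ (Zspans_zspan P predT x)); rewrite deg_partE; split=> Sx.
  apply: zspan_trans Sx _ => t /eqP tk.
  apply: zspan_trans (RL_tree_lyndon_span t) _ => w /and3P[pw lw uw].
  have wws : w \in ws by rewrite mem_ws lw uw (perm_size pw) -bt_len_leaves tk eqxx.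
  have iw : (index w ws < size ws)%N by rewrite index_mem.
  by rewrite -(nth_index [::] wws); apply: (zspan_gen P predT (Ordinal iw)).
apply: zspan_trans Sx _ => j _; have /and3P[_ /eqP sw lw] := nth_ws j; rewrite /P.
have [t <- tw] := lyndon_mon_tree br i (nth [::] ws j) ltac:(by case: (nth _ _ _) lw).
by apply: (zspan_gen _ _ t); rewrite bt_len_leaves tw sw.
Qed.

End Basis.

Theorem proposition2p9 (d : Order.disp_t) (Y : orderType d) (L : zmodType)
  (br : L -> L -> L) (i : Y -> L) :
  is_RL br i ->
  is_Zbasis (lyndon_mon br i) (fun w : seq Y => lyndon w && uniq w) (fun _ => True)
  /\ (forall e : seq Y, uniq e -> (forall y, y \in e) ->
      forall k : nat, (1 <= k)%N ->
        free_of_rank (deg_part br i k) ((k.-1)`! * 'C(size e, k))%N).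
Proof.
move=> RL; split; first exact: lyndon_mon_basis.
move=> e ue e_all k k_gt0.
have sorted_e : sorted <%O (sort <=%O e) by rewrite sort_lt_sorted.
rewrite -(perm_size (permEl (perm_sort <=%O e))) -size_lyndon_words ?sort_uniq //.
apply: deg_part_free RL _ _ (lyndon_words_uniq _ _ k_gt0 sorted_e) _ => w.
have w_in_e : all [in sort <=%O e] w by apply/allP => y _; rewrite mem_sort.
by rewrite mem_lyndon_words // w_in_e.
Qed.
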